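(* For every infinite sequence of integers $a_1,a_2,a_3,\dots$ there exists a rod set $R$ such that $F(n,R)=a_n$ for all $n\ge1$.
   Context: A rod is a triple $(r,c,\varepsilon)$ with $r$ a positive integer (its length), $c$ an arbitrary tag (a ''color''), and $\varepsilon\in\{+1,-1\}$ its sign; a rod of sign $-1$ is an antirod. A rod set is a set of rods with only finitely many rods of each length. A train built from $R$ is a finite sequence of rods of $R$, including the empty train; its length is the sum of the rod lengths and its sign the product of the rod signs. The net train count $F(n,R)$ is the number of positive trains of length $n$ built from $R$ minus the number of negative ones (so $F(0,R)=1$). *)

From mathcomp Require Import all_boot all_order all_algebra.
Set Implicit Arguments. Unset Strict Implicit. Unset Printing Implicit Defensive.
Import GRing.Theory Num.Theory.

(* A rod (r, c, eps): length r, colour c (colours taken in nat), sign eps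
   (true = +1, false = -1, i.e. an antirod). *)
Definition rod := (nat * nat * bool)%type.
Definition rod_len (x : rod) : nat := x.1.1.
Definition rod_sign (x : rod) : int := if x.2 then 1%R else (-1)%R.

Record rodset := RodSet {
  rods : nat -> seq rod;
  rods_len : forall r x, x \in rods r -> rod_len x = r;
  rods0 : rods 0 = [::];
  rods_uniq : forall r, uniq (rods r)
}.

(* All trains (finite sequences of rods of R) of total length n, enumerated
   by the first rod; [fuel] only bounds the recursion (fuel >= n suffices). *)
Fixpoint trains_aux (R : rodset) (fuel n : nat) : seq (seq rod) :=
  if n == 0 then [:: [::]] else
  match fuel with
  | 0 => [::]
  | f.+1 => flatten (map (fun k =>
              flatten (map (fun x => map (cons x) (trains_aux R f (n - k)))
                           (rods R k)))
            (iota 1 n))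
  end.

Definition trains (R : rodset) (n : nat) : seq (seq rod) := trains_aux R n n.

Definition train_len (t : seq rod) : nat := \sum_(x <- t) rod_len x.
Definition train_sign (t : seq rod) : int := (\prod_(x <- t) rod_sign x)%R.

Definition F (n : nat) (R : rodset) : int :=
  (\sum_(t <- trains R n) train_sign t)%R.

(* The net train count obeys the renewal recursion
     F(0) = 1,   F(n) = sum_(1 <= k <= n) C_k F(n - k),
   where C_k is the net number of rods of length k (classify a train by its
   first rod).  Conversely any integer sequence C_1, C_2, ... is realised as
   the net rod count of a rod set (|C_k| rods of length k, all of the sign of
   C_k).  So it suffices to solve the triangular system
     a_n = C_n + sum_(1 <= k < n) C_k a_(n - k)
   for the C_n, one n at a time. *)

From mathcomp Require Import all_boot all_order all_algebra.
Set Implicit Arguments. Unset Strict Implicit. Unset Printing Implicit Defensive.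
Import Order.TTheory GRing.Theory Num.Theory.

Local Open Scope ring_scope.

Section CourseOfValues.

Variables (T : Type) (x0 : T) (step : nat -> (nat -> T) -> T).
Hypothesis step_ext : forall n f g,
  (forall k, (k < n)%N -> f k = g k) -> step n f = step n g.

Fixpoint cov_seq (n : nat) : seq T :=
  if n is m.+1 then rcons (cov_seq m) (step n (nth x0 (cov_seq m)))
  else [:: step 0 (nth x0 [::])].

Definition cov_rec (n : nat) : T := nth x0 (cov_seq n) n.

Lemma size_cov_seq n : size (cov_seq n) = n.+1.
Proof. by elim: n => //= n IH; rewrite size_rcons IH. Qed.

Lemma nth_cov_seq n k : (k <= n)%N -> nth x0 (cov_seq n) k = cov_rec k.
Proof.
elim: n => [|n IH]; first by rewrite leqn0 => /eqP ->.
rewrite leq_eqVlt => /orP [/eqP -> //|]; rewrite ltnS => le_kn.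
by rewrite /= nth_rcons size_cov_seq ltnS le_kn IH.
Qed.

Lemma cov_recE n : cov_rec n = step n cov_rec.
Proof.
case: n => [|n]; first by apply: step_ext.
rewrite /cov_rec /= nth_rcons size_cov_seq ltnn eqxx.
by apply: step_ext => k lt_kn; rewrite nth_cov_seq.
Qed.

End CourseOfValues.

Section TrainRecursion.

Variable R : rodset.

Definition rod_count (k : nat) : int := \sum_(x <- rods R k) rod_sign x.

Definition net_trains_aux (fuel n : nat) : int :=
  \sum_(t <- trains_aux R fuel n) train_sign t.

Lemma trains_auxS fuel n : trains_aux R fuel.+1 n.+1 =
  flatten [seq flatten [seq map (cons x) (trains_aux R fuel (n.+1 - k)) | x <- rods R k]
          | k <- iota 1 n.+1].
Proof. by []. Qed.

Lemma train_sign_cons x t : train_sign (x :: t) = rod_sign x * train_sign t.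
Proof. by rewrite /train_sign big_cons. Qed.

Lemma net_trains_aux0 fuel : net_trains_aux fuel 0 = 1.
Proof. by case: fuel => [|f]; rewrite /net_trains_aux /= big_seq1 /train_sign big_nil. Qed.

Lemma net_trains_auxS fuel n : net_trains_aux fuel.+1 n.+1 =
  \sum_(k <- iota 1 n.+1) rod_count k * net_trains_aux fuel (n.+1 - k).
Proof.
rewrite /net_trains_aux trains_auxS big_flatten big_map; apply: eq_bigr => k _.
rewrite big_flatten big_map /rod_count big_distrl; apply: eq_bigr => x _.
by rewrite big_map big_distrr; apply: eq_bigr => t _; rewrite train_sign_cons.
Qed.

Lemma net_trains_aux_fuel f g n : (n <= f)%N -> (n <= g)%N ->
  net_trains_aux f n = net_trains_aux g n.
Proof.
elim: f g n => [|f IH] g [|m] //; rewrite ?net_trains_aux0 //.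
case: g => // g le_mf le_mg.
rewrite !net_trains_auxS; apply: eq_big_seq => k; rewrite mem_iota => /andP [k_gt0 _].
by congr (_ * _); apply: IH; rewrite leq_subLR -add1n leq_add.
Qed.

Lemma F0 : F 0 R = 1.
Proof. exact: net_trains_aux0. Qed.

Lemma F_rec n : F n.+1 R = \sum_(1 <= k < n.+2) rod_count k * F (n.+1 - k) R.
Proof.
rewrite /F /trains -/(net_trains_aux _ _) net_trains_auxS.
apply: eq_big_seq => k; rewrite mem_iota => /andP [k_gt0 _].
by congr (_ * _); apply: net_trains_aux_fuel; rewrite // leq_subLR -add1n leq_add.
Qed.

End TrainRecursion.

Section RodSetOfCounts.

Variable C : nat -> int.

Definition rods_of_counts (r : nat) : seq rod :=
  if r is 0 then [::] else [seq (r, i, 0 <= C r) | i <- iota 0 `|C r|%N].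

Lemma rods_of_counts_len r x : x \in rods_of_counts r -> rod_len x = r.
Proof. by case: r => //= r /mapP [i _ ->]. Qed.

Lemma rods_of_counts_uniq r : uniq (rods_of_counts r).
Proof. by case: r => //= r; rewrite map_inj_uniq ?iota_uniq // => i j []. Qed.

Definition rodset_of_counts : rodset :=
  RodSet rods_of_counts_len (erefl [::]) rods_of_counts_uniq.

Lemma rod_count_of_counts r : (0 < r)%N -> rod_count rodset_of_counts r = C r.
Proof.
case: r => // r _; rewrite /rod_count /= big_map big_const_seq count_predT.
rewrite size_iota iter_addr_0 /rod_sign.
have [C_ge0 | C_lt0] := leP 0 (C r.+1).
  by rewrite natr_absz intz ger0_norm.
by rewrite mulNrn natr_absz intz ltr0_norm ?opprK.
Qed.

End RodSetOfCounts.

Section RodCountsFromTargets.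

Variable a : nat -> int.

Definition target (n : nat) : int := if n is 0 then 1 else a n.

Definition counts_step (n : nat) (C : nat -> int) : int :=
  a n - \sum_(1 <= k < n) C k * target (n - k).

Definition target_counts : nat -> int := cov_rec 0 counts_step.

Lemma target_countsE n :
  target_counts n = a n - \sum_(1 <= k < n) target_counts k * target (n - k).
Proof.
rewrite [LHS](@cov_recE _ 0 counts_step) // => {}n f g eq_fg; congr (_ - _).
by apply: eq_big_nat => k /andP [_ lt_kn]; rewrite eq_fg.
Qed.

Lemma target_renewal n :
  target n.+1 = \sum_(1 <= k < n.+2) target_counts k * target (n.+1 - k).
Proof. by rewrite big_nat_recr //= subnn mulr1 (target_countsE n.+1) addrC subrK. Qed.

End RodCountsFromTargets.

Theorem theorem2 (a : nat -> int) :
  exists R : rodset, forall n : nat, (1 <= n)%N -> F n R = a n.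
Proof.
pose R := rodset_of_counts (target_counts a).
suff F_target n : F n R = target a n by exists R => -[|n] // _; apply: F_target.
elim/ltn_ind: n => -[_ | n IH]; first exact: F0.
rewrite F_rec target_renewal; apply: eq_big_nat => k /andP [k_gt0 _].
by rewrite rod_count_of_counts // IH // ltn_subrL k_gt0.
Qed.
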